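(* Let $q\ge 2$ be a prime, and let $\Gamma=(V,E)$ be a complete digraph on $2q-1$ vertices with weights $w(e)\in\mathbb{Z}_q$ on its edges. Then $\Gamma$ contains a directed cycle $C$ whose total weight $\sum_{e\in C} w(e)$ is $0$ in $\mathbb{Z}_q$.
   Context: A complete digraph is a digraph in which every ordered pair $(u,v)$ of distinct vertices is joined by exactly one directed edge from $u$ to $v$ (so each pair of vertices is connected by one edge in each direction). Directed cycles may have length $2$. *)

From mathcomp Require Import all_boot all_algebra.
Set Implicit Arguments. Unset Strict Implicit. Unset Printing Implicit Defensive.
Import GRing.Theory.
Local Open Scope ring_scope.

(* The complete digraph on a finite vertex type V: every ordered pair (u,v)
   with u <> v is an edge.  An edge weighting with values in a ring R is a
   function w : V -> V -> R (the diagonal values w v v are never used, as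
   there are no loops).

   A directed cycle is given by a duplicate-free sequence c of at least 2
   vertices [v_0; ...; v_{k-1}], with edges v_i -> v_{i+1} and v_{k-1} -> v_0
   (so cycles of length 2 are allowed).  In the complete digraph every such
   sequence is a directed cycle. *)
Definition is_dcycle (V : finType) (c : seq V) : bool :=
  uniq c && (2 <= size c)%N.

Definition cycle_weight (V : finType) (R : nmodType) (w : V -> V -> R)
  (c : seq V) : R :=
  \sum_(x <- c) w x (next c x).

(* Fix a root r and build, for k = 0, 1, ..., q - 1, a set A_k of at least
   k + 1 residues, all realised as weights of simple paths from r to one common
   end vertex c_k inside a set of 2k + 1 vertices.  To pass from k to k + 1,
   take two fresh vertices a, b and extend every path either by c -> b or by
   c -> a -> b (or symmetrically with a, b exchanged).  This replaces A_k by
   (A_k + alpha) \cup (A_k + beta), which has more elements than A_k unless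
   alpha = beta or A_k = Z_q, because a nonempty proper subset of Z_q is not
   invariant under a nonzero translation.  Both choices give alpha = beta only
   if w(a,b) + w(b,a) = 0, i.e. if there is a zero 2-cycle anyway.  Finally
   A_{q-1} = Z_q contains -w(c,r), and closing the corresponding path by the
   edge c -> r gives a zero cycle. *)

From mathcomp Require Import all_boot all_algebra zify.
Set Implicit Arguments. Unset Strict Implicit.
Import GRing.Theory.
Local Open Scope ring_scope.

Section PrimeTranslates.

Variables (p : nat) (p_pr : prime p).

Lemma card_Zp_prime : #|'Z_p| = p.
Proof. by rewrite card_ord Zp_cast // prime_gt1. Qed.

Lemma Zp_prime_unit (x : 'Z_p) : x != 0 -> x \is a GRing.unit.
Proof.
move=> x_neq0; rewrite -(natr_Zp x) unitZpE ?prime_gt1 // prime_coprime //.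
have x_gt0 : (0 < x)%N by rewrite lt0n; apply: contra x_neq0 => /eqP x0; apply/eqP/val_inj.
by rewrite gtnNdvd // -[X in (_ < X)%N]Zp_cast ?prime_gt1.
Qed.

Lemma shift_closed_setT (A : {set 'Z_p}) (d x : 'Z_p) :
  d != 0 -> x \in A -> {in A, forall y, y + d \in A} -> A = setT.
Proof.
move=> d_neq0 xA closedA; apply/setP => z; rewrite inE.
have shiftsA n : x + d *+ n \in A.
  by elim: n => [|n IHn]; rewrite ?mulr0n ?addr0 // mulrS addrCA addrC closedA.
set u := d^-1 * (z - x).
suff -> : z = x + d *+ u by apply: shiftsA.
by rewrite -mulr_natr natr_Zp mulrA divrr ?Zp_prime_unit // mul1r addrC subrK.
Qed.

Lemma card_shifts_union (A : {set 'Z_p}) (a b : 'Z_p) : a != b -> A != set0 ->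
  (minn #|A|.+1 p <= #|[set (x + a)%R | x in A] :|: [set (x + b)%R | x in A]|)%N.
Proof.
move=> ab A_neq0; set A' := _ :|: _.
have card_shift c : #|[set x + c | x in A]| = #|A| by apply/card_imset/addIr.
have le_A_A' : (#|A| <= #|A'|)%N by rewrite -(card_shift a) subset_leq_card ?subsetUl.
have [lt_A_A'|] := ltnP #|A| #|A'|; first by rewrite geq_min lt_A_A'.
move=> le_A'_A; have {le_A'_A} eq_Aa : [set x + a | x in A] = A'.
  by apply/eqP; rewrite eqEcard subsetUl card_shift le_A'_A.
have closedA : {in A, forall y, y + (b - a) \in A}.
  move=> y yA; have : y + b \in A' by rewrite inE; apply/orP; right; apply: imset_f.
  by rewrite -eq_Aa => /imsetP [z zA yb]; rewrite addrA yb addrK.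
have /set0Pn [x xA] := A_neq0.
have ba_neq0 : b - a != 0 by rewrite subr_eq0 eq_sym.
have A_T := shift_closed_setT ba_neq0 xA closedA.
have : #|A| = p by rewrite A_T cardsT card_Zp_prime.
lia.
Qed.

End PrimeTranslates.

Section PathWeight.

Variables (V : finType) (R : nmodType) (w : V -> V -> R).

Fixpoint path_weight (x : V) (p : seq V) : R :=
  if p is y :: p' then w x y + path_weight y p' else 0.

Lemma path_weight_rcons x p y :
  path_weight x (rcons p y) = path_weight x p + w (last x p) y.
Proof. by elim: p x => [|z p IHp] x /=; rewrite ?IHp ?addr0 ?add0r ?addrA. Qed.

Lemma path_weight_fpath (f : V -> V) x p z : fpath f x (rcons p z) ->
  \sum_(y <- x :: p) w y (f y) = path_weight x (rcons p z).
Proof.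
elim: p x => [|y p IHp] x /=; first by rewrite andbT big_seq1 addr0 => /eqP ->.
by case/andP=> /eqP fx_y /IHp; rewrite big_cons fx_y => ->.
Qed.

Lemma cycle_weightE x p :
  uniq (x :: p) -> cycle_weight w (x :: p) = path_weight x (rcons p x).
Proof. by move/cycle_next/path_weight_fpath. Qed.

Variable r : V.

Definition reaches (U : {set V}) (c : V) (t : R) : Prop :=
  exists p, [/\ uniq (r :: p), {subset r :: p <= U}, last r p = c
              & path_weight r p = t].

Lemma reaches_root (U : {set V}) : r \in U -> reaches U r 0.
Proof. by move=> rU; exists [::]; split=> // x; rewrite inE => /eqP ->. Qed.

Lemma reaches_sub (U U' : {set V}) c t :
  U \subset U' -> reaches U c t -> reaches U' c t.
Proof. by move=> /subsetP sUU' [p [up sp lp wp]]; exists p; split=> // x /sp/sUU'. Qed.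

Lemma reaches_rcons (U : {set V}) c t e :
  e \notin U -> reaches U c t -> reaches (e |: U) e (t + w c e).
Proof.
move=> eU [p [up sp <- <-]]; exists (rcons p e); split.
- by rewrite -rcons_cons rcons_uniq up andbT; apply: contra eU => /sp.
- move=> x; rewrite -rcons_cons mem_rcons inE in_setU1.
  by case/predU1P=> [-> | /sp ->]; rewrite ?eqxx ?orbT.
- exact: last_rcons.
- exact: path_weight_rcons.
Qed.

Lemma reaches_cycle (U : {set V}) c t : c != r -> reaches U c t ->
  exists2 cyc, is_dcycle cyc & cycle_weight w cyc = t + w c r.
Proof.
move=> cr [p [up _ lp <-]]; exists (r :: p).
  by rewrite /is_dcycle up; case: p lp {up} => [/= rc|//]; rewrite rc eqxx in cr.
by rewrite cycle_weightE // path_weight_rcons lp.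
Qed.

Lemma reaches_rcons2 (U : {set V}) c t o e : o \notin U -> e \notin o |: U ->
  reaches U c t -> reaches (e |: (o |: U)) e (t + (w c o + w o e)).
Proof. by move=> oU eoU /(reaches_rcons oU)/(reaches_rcons eoU); rewrite addrA. Qed.

End PathWeight.

Lemma detour_neq (V : eqType) (R : zmodType) (w : V -> V -> R) a b c :
  w a b + w b a != 0 -> (w c a + w a b != w c b) || (w c b + w b a != w c a).
Proof.
rewrite -negb_and; apply: contra => /andP [/eqP Eb /eqP Ea].
by rewrite addrC -(inj_eq (addrI (w c b))) addr0 addrA Ea Eb.
Qed.

Section ZeroCycle.

Variables (q : nat) (q_pr : prime q) (V : finType) (w : V -> V -> 'Z_q) (r : V).
Hypothesis no_zero_2cycle : forall a b, a != b -> w a b + w b a != 0.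

Lemma many_reachable_weights k : (k < q)%N -> forall U : {set V}, r \in U -> (2 * k + 1 <= #|U|)%N ->
  exists c (A : {set 'Z_q}),
    [/\ (k < #|A|)%N, (0 < k)%N -> c != r & {in A, forall t, reaches w r U c t}].
Proof.
elim: k => [|k IHk] lt_k_q U rU le_U.
  exists r, [set 0]; split=> [||t]; rewrite ?cards1 // inE => /eqP ->.
  exact: reaches_root.
have [a aU] : exists a, a \in U :\ r.
  by apply/set0Pn; rewrite -card_gt0 (cardsD1 r U) rU in le_U *; lia.
have [b bU] : exists b, b \in U :\ r :\ a.
  apply/set0Pn; rewrite -card_gt0.
  by move: le_U; rewrite (cardsD1 r U) (cardsD1 a (U :\ r)) rU aU; lia.
move: aU bU; rewrite !inE => /andP [ar aU] /and3P [ba br bU].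
set U' := U :\ a :\ b.
have aU' : a \notin U' by rewrite !inE eqxx andbF.
have bU' : b \notin U' by rewrite !inE eqxx.
have [c [A [le_A _ reachA]]] : exists c (A : {set 'Z_q}),
    [/\ (k < #|A|)%N, (0 < k)%N -> c != r & {in A, forall t, reaches w r U' c t}].
  apply: IHk; first lia.
    by rewrite !inE eq_sym br eq_sym ar rU.
  by move: le_U; rewrite /U' (cardsD1 a U) (cardsD1 b (U :\ a)) aU !inE ba bU; lia.
have [o [e [er oU' eoU' sub_U detour]]] : exists o e, [/\ e != r, o \notin U',
    e \notin o |: U', e |: (o |: U') \subset U & w c o + w o e != w c e].
  have sub_U : a |: (b |: U') \subset U.
    by apply/subsetP => x; rewrite !inE => /or3P [/eqP ->|/eqP ->|/and3P []].
  have ab : a != b by rewrite eq_sym.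
  case/orP: (detour_neq c (no_zero_2cycle ba)) => detour;
    [exists b, a | exists a, b; rewrite setUCA];
    by split; rewrite // in_setU1 negb_or ?aU' ?bU' ?ab ?ba.
exists e, ([set t + w c e | t in A] :|: [set t + (w c o + w o e) | t in A]).
split=> //; last first.
  have eU' : e \notin U' by apply: contra eoU'; rewrite in_setU1 => ->; rewrite orbT.
  move=> t; rewrite inE => /orP [] /imsetP [s /reachA reach_s ->];
    apply: (reaches_sub (U := e |: (o |: U')) sub_U).
    exact: reaches_sub (setUS _ (subsetUr _ _)) (reaches_rcons eU' reach_s).
  exact: reaches_rcons2.
have A_neq0 : A != set0 by rewrite -card_gt0 (leq_ltn_trans _ le_A).
rewrite eq_sym in detour; apply: leq_trans (card_shifts_union q_pr detour A_neq0).
by rewrite leq_min ltnS le_A lt_k_q.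
Qed.

End ZeroCycle.

Unset Implicit Arguments.
Theorem lemma5 (q : nat) (hq : prime q) (V : finType)
  (hV : #|V| = (2 * q - 1)%N) (w : V -> V -> 'Z_q) :
  exists c : seq V, is_dcycle c /\ cycle_weight w c = 0.
Proof.
have q_gt1 := prime_gt1 hq.
have lt_pred_q : (q.-1 < q)%N by lia.
have pred_q_gt0 : (0 < q.-1)%N by lia.
have le_V : (2 * q.-1 + 1 <= #|[set: V]|)%N by rewrite cardsT hV; lia.
have [r _] : exists r : V, r \in [set: V].
  by apply/set0Pn; rewrite -card_gt0; apply: leq_trans le_V; rewrite addn1.
have [/existsP [a /existsP [b /andP [ba /eqP zero_ab]]] | /existsPn no2] :=
  boolP [exists a, exists b, (b != a) && (w a b + w b a == 0)].
  have b_a : b \notin [set a] by rewrite inE.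
  have /(reaches_cycle ba) [cyc dcyc wcyc] := reaches_rcons b_a (reaches_root w (set11 a)).
  by exists cyc; rewrite wcyc add0r.
have no_zero_2cycle a b : a != b -> w a b + w b a != 0.
  by move=> ab; have /existsPn/(_ b) := no2 a; rewrite eq_sym ab.
have [c [A [le_A cr reachA]]] := many_reachable_weights hq no_zero_2cycle lt_pred_q (in_setT r) le_V.
have A_T : A = setT.
  apply/eqP; rewrite eqEcard subsetT cardsT card_Zp_prime //.
  by rewrite -[X in (X <= _)%N](ltn_predK lt_pred_q).
have /(reaches_cycle (cr pred_q_gt0)) [cyc dcyc wcyc] : reaches w r [set: V] c (- w c r).
  by apply: reachA; rewrite A_T inE.
by exists cyc; rewrite wcyc addNr.
Qed.
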